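(* Let $u\equiv0$ and assume $\mathcal R_0<1$. Then $\mathbf 0\in\mathbb R^4$ is globally asymptotically stable in $\mathcal D'=[0,+\infty)^4$ for the system $$\dot E=\beta_E F\Big(1-\frac EK\Big)-(\nu_E+\delta_E)E,\quad \dot M=(1-\nu)\nu_E E-\delta_M M,\quad \dot F=\nu\nu_E E\frac{M}{M+\gamma_sM_s}-\delta_F F,\quad \dot M_s=u-\delta_sM_s.$$
   Context: Parameters: $\beta_E,\nu_E,\delta_E,\delta_M,\delta_F,\delta_s,K>0$, $\nu\in(0,1)$, $\gamma_s\in(0,1]$, and $\delta_s\ge\delta_M$. $\mathcal R_0:=\dfrac{\beta_E\nu\nu_E}{\delta_F(\nu_E+\delta_E)}$. State $z=(E,M,F,M_s)^T\in\mathcal D'$. For a feedback $u:\mathcal D'\to[0,+\infty)$ with $u\in L^\infty_{loc}(\mathcal D')$, write $X(z)$ for the right-hand side above with $u=u(z)$ (its value on the null set $\{M=M_s=0\}$ is irrelevant). Solutions are Filippov solutions: locally Lipschitz curves $z:I\to\mathcal D'$ ($I$ an interval) such that for a.e. $t\in I$, $\dot z(t)\in\bigcap_{\varepsilon>0}\bigcap_{N}\overline{\mathrm{conv}}\,X\big(((z(t)+\varepsilon B)\cap\mathcal D')\setminus N\big)$, where $B$ is the unit ball of $\mathbb R^4$, $N$ ranges over Lebesgue-null subsets of $\mathbb R^4$, and $\overline{\mathrm{conv}}$ denotes the closed convex hull. For $\mathcal S\subset\mathcal D'$, an equilibrium $z_e$ is stable in $\mathcal S$ if for every $\varepsilon>0$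 there is $\delta>0$ such that every Filippov solution with $z(0)\in\mathcal S$ and $\|z(0)-z_e\|<\delta$ satisfies $\|z(t)-z_e\|<\varepsilon$ for all $t>0$; it is a global attractor in $\mathcal S$ if every Filippov solution with $z(0)\in\mathcal S$ satisfies $z(t)\to z_e$; it is globally asymptotically stable in $\mathcal S$ if both hold. *)

From Stdlib Require Import Reals.
Open Scope R_scope.

Record V4 := mk4 { cE : R; cM : R; cF : R; cMs : R }.

Definition vzero : V4 := mk4 0 0 0 0.
Definition vadd (x y : V4) : V4 :=
  mk4 (cE x + cE y) (cM x + cM y) (cF x + cF y) (cMs x + cMs y).
Definition vscale (a : R) (x : V4) : V4 :=
  mk4 (a * cE x) (a * cM x) (a * cF x) (a * cMs x).
Definition vsub (x y : V4) : V4 := vadd x (vscale (-1) y).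
Definition vnorm (x : V4) : R :=
  sqrt (cE x ^ 2 + cM x ^ 2 + cF x ^ 2 + cMs x ^ 2).

Definition Dp (z : V4) : Prop :=
  0 <= cE z /\ 0 <= cM z /\ 0 <= cF z /\ 0 <= cMs z.

Definition R0_basic (betaE nuE deltaE deltaF nu : R) : R :=
  betaE * nu * nuE / (deltaF * (nuE + deltaE)).

(** Right-hand side X(z) with feedback u.  At M = M_s = 0 the quotient
    M/(M + gamma_s M_s) evaluates to 0 (Stdlib's total division);
    this value is irrelevant (null set). *)
Definition Xfield (betaE nuE deltaE deltaM deltaF deltaS K nu gammaS : R)
    (u : V4 -> R) (z : V4) : V4 :=
  let E := cE z in let M := cM z in let F := cF z in let Ms := cMs z in
  mk4 (betaE * F * (1 - E / K) - (nuE + deltaE) * E)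
      ((1 - nu) * nuE * E - deltaM * M)
      (nu * nuE * E * (M / (M + gammaS * Ms)) - deltaF * F)
      (u z - deltaS * Ms).

Definition null1 (N : R -> Prop) : Prop :=
  forall eps, 0 < eps ->
    exists a b : nat -> R,
      (forall k, a k <= b k) /\
      (forall t, N t -> exists k, a k <= t <= b k) /\
      (forall n, sum_f_R0 (fun k => b k - a k) n <= eps).

Definition in_box (lo hi x : V4) : Prop :=
  cE lo <= cE x <= cE hi /\ cM lo <= cM x <= cM hi /\
  cF lo <= cF x <= cF hi /\ cMs lo <= cMs x <= cMs hi.
Definition box_vol (lo hi : V4) : R :=
  (cE hi - cE lo) * (cM hi - cM lo) * (cF hi - cF lo) * (cMs hi - cMs lo).
Definition null4 (N : V4 -> Prop) : Prop :=
  forall eps, 0 < eps ->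
    exists lo hi : nat -> V4,
      (forall k, cE (lo k) <= cE (hi k) /\ cM (lo k) <= cM (hi k) /\
                 cF (lo k) <= cF (hi k) /\ cMs (lo k) <= cMs (hi k)) /\
      (forall x, N x -> exists k, in_box (lo k) (hi k) x) /\
      (forall n, sum_f_R0 (fun k => box_vol (lo k) (hi k)) n <= eps).

Definition closed4 (C : V4 -> Prop) : Prop :=
  forall x, (forall e, 0 < e -> exists y, C y /\ vnorm (vsub y x) < e) -> C x.
Definition convex4 (C : V4 -> Prop) : Prop :=
  forall x y t, C x -> C y -> 0 <= t <= 1 ->
    C (vadd (vscale t x) (vscale (1 - t) y)).
Definition cl_conv_hull (S : V4 -> Prop) (v : V4) : Prop :=
  forall C, closed4 C -> convex4 C -> (forall w, S w -> C w) -> C v.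

Definition filippov_set (X : V4 -> V4) (z v : V4) : Prop :=
  forall eps, 0 < eps -> forall N, null4 N ->
    cl_conv_hull
      (fun w => exists y, Dp y /\ vnorm (vsub y z) < eps /\ ~ N y /\ w = X y) v.

Definition is_interval (I : R -> Prop) : Prop :=
  forall a b c, I a -> I c -> a <= b <= c -> I b.
Definition loc_lipschitz (I : R -> Prop) (z : R -> V4) : Prop :=
  forall t, I t -> exists d L, 0 < d /\
    forall s s', I s -> I s' -> Rabs (s - t) < d -> Rabs (s' - t) < d ->
      vnorm (vsub (z s) (z s')) <= L * Rabs (s - s').

Definition has_deriv (z : R -> V4) (t : R) (v : V4) : Prop :=
  derivable_pt_lim (fun s => cE (z s)) t (cE v) /\
  derivable_pt_lim (fun s => cM (z s)) t (cM v) /\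
  derivable_pt_lim (fun s => cF (z s)) t (cF v) /\
  derivable_pt_lim (fun s => cMs (z s)) t (cMs v).

(** Filippov solution on the interval I (values of z outside I are irrelevant). *)
Definition filippov_solution (X : V4 -> V4) (I : R -> Prop) (z : R -> V4) : Prop :=
  is_interval I /\
  (forall t, I t -> Dp (z t)) /\
  loc_lipschitz I z /\
  exists N, null1 N /\
    forall t, I t -> ~ N t ->
      exists v, has_deriv z t v /\ filippov_set X (z t) v.

Definition stable_in (X : V4 -> V4) (S : V4 -> Prop) (ze : V4) : Prop :=
  forall eps, 0 < eps -> exists d, 0 < d /\
    forall I z, filippov_solution X I z -> I 0 -> S (z 0) ->
      vnorm (vsub (z 0) ze) < d ->
      forall t, I t -> 0 < t -> vnorm (vsub (z t) ze) < eps.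

Definition global_attractor_in (X : V4 -> V4) (S : V4 -> Prop) (ze : V4) : Prop :=
  forall I z, filippov_solution X I z -> (forall t, 0 <= t -> I t) -> S (z 0) ->
    forall eps, 0 < eps -> exists T, forall t, T <= t ->
      vnorm (vsub (z t) ze) < eps.

Definition GAS_in (X : V4 -> V4) (S : V4 -> Prop) (ze : V4) : Prop :=
  stable_in X S ze /\ global_attractor_in X S ze.

From Stdlib Require Import Reals Lra Lia Psatz Classical.
Open Scope R_scope.

(* With weights r, b > 0 chosen using R0 < 1, the linear function
   W = E + r F + b M + M_s satisfies W(X y) <= - mu W y on D' for some mu > 0: the
   logistic factor and the mating fraction M/(M + gamma_s M_s) only lower the right-hand
   side.  A half-space inequality survives closed convex hulls, so along every Filippov
   solution W is locally Lipschitz with W' <= - mu W almost everywhere.  A Lipschitz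
   function whose derivative is nonpositive off a null set is nonincreasing; this gives
   stability, and applied to W t + mu c t it shows that W falls below any level c > 0 in
   finite time.  Since W dominates a multiple of the Euclidean norm on D', z -> 0. *)

Lemma le_of_forall_le_plus_mul x y K :
  0 <= K -> (forall e, 0 < e -> x <= y + K * e) -> x <= y.
Proof.
  intros HK H. destruct (Rle_dec x y) as [h|h]; [exact h|exfalso].
  set (e := (x - y) / (K + 1)).
  assert (He : e * (K + 1) = x - y) by (unfold e; field; lra).
  assert (Hpos : 0 < e) by (unfold e; apply Rdiv_lt_0_compat; lra).
  specialize (H e Hpos). nra.
Qed.

Lemma real_induction (a b : R) (S : R -> Prop) :
  a <= b -> S a ->
  (forall t, a <= t < b -> S t ->
     exists d, 0 < d /\ forall s, t < s <= t + d -> s <= b -> S s) ->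
  (forall t, a < t <= b -> (forall s, a <= s < t -> S s) -> S t) ->
  S b.
Proof.
  intros Hab Ha Hstep Hleft.
  set (E := fun x => a <= x <= b /\ forall s, a <= s <= x -> S s).
  assert (Ea : E a).
  { split; [lra|]. intros s Hs. replace s with a by lra. exact Ha. }
  assert (HE : bound E) by (exists b; intros x [Hx _]; lra).
  destruct (completeness E HE (ex_intro _ a Ea)) as [c [Hub Hlub]].
  assert (Hac : a <= c) by (apply Hub; exact Ea).
  assert (Hcb : c <= b) by (apply Hlub; intros x [Hx _]; lra).
  assert (Hbelow : forall s, a <= s < c -> S s).
  { intros s Hs.
    destruct (classic (exists x, E x /\ s < x)) as [[x [[_ Hx] Hsx]]|Hn].
    - apply Hx; lra.
    - exfalso. enough (c <= s) by lra. apply Hlub. intros x Ex.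
      destruct (Rle_dec x s) as [h|h]; [exact h|].
      exfalso; apply Hn; exists x; split; [exact Ex|lra]. }
  assert (Sc : S c).
  { destruct (Req_dec c a) as [->|Hca]; [exact Ha|]. apply Hleft; [lra|exact Hbelow]. }
  assert (Hc : forall s, a <= s <= c -> S s).
  { intros s Hs. destruct (Req_dec s c) as [->|Hsc]; [exact Sc|]. apply Hbelow; lra. }
  destruct (Req_dec c b) as [<-|Hne]; [exact Sc|exfalso].
  destruct (Hstep c) as [d [Hd Hs]]; [lra|exact Sc|].
  set (c' := Rmin (c + d) b).
  assert (c' <= c + d /\ c' <= b /\ c < c') as (H1 & H2 & H3)
    by (unfold c', Rmin; destruct Rle_dec; lra).
  assert (Ec' : E c').
  { split; [lra|]. intros s Hs'.
    destruct (Rle_dec s c); [apply Hc; lra|apply Hs; lra]. }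
  specialize (Hub c' Ec'). lra.
Qed.

Definition lipschitz_on (a b L : R) (g : R -> R) : Prop :=
  forall x y, a <= x <= b -> a <= y <= b -> Rabs (g x - g y) <= L * Rabs (x - y).

Definition loc_lipschitz_fun (I : R -> Prop) (g : R -> R) : Prop :=
  forall t, I t -> exists d L, 0 < d /\
    forall s s', I s -> I s' -> Rabs (s - t) < d -> Rabs (s' - t) < d ->
      Rabs (g s - g s') <= L * Rabs (s - s').

Lemma lipschitz_on_concat a t s L1 L2 g :
  a <= t -> t <= s -> 0 <= L1 -> 0 <= L2 ->
  lipschitz_on a t L1 g -> lipschitz_on t s L2 g -> lipschitz_on a s (Rmax L1 L2) g.
Proof.
  intros Hat Hts H1 H2 La Lb.
  pose proof (Rmax_l L1 L2). pose proof (Rmax_r L1 L2).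
  assert (ordered : forall x y, a <= x <= s -> a <= y <= s -> x <= y ->
            Rabs (g x - g y) <= Rmax L1 L2 * Rabs (x - y)).
  { intros x y Hx Hy Hxy. rewrite (Rabs_left1 (x - y)) by lra.
    destruct (Rle_dec y t).
    - specialize (La x y ltac:(lra) ltac:(lra)).
      rewrite (Rabs_left1 (x - y)) in La by lra. nra.
    - destruct (Rle_dec t x).
      + specialize (Lb x y ltac:(lra) ltac:(lra)).
        rewrite (Rabs_left1 (x - y)) in Lb by lra. nra.
      + specialize (La x t ltac:(lra) ltac:(lra)). specialize (Lb t y ltac:(lra) ltac:(lra)).
        rewrite (Rabs_left1 (x - t)) in La by lra. rewrite (Rabs_left1 (t - y)) in Lb by lra.
        assert (Rabs (g x - g y) <= Rabs (g x - g t) + Rabs (g t - g y)).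
        { replace (g x - g y) with ((g x - g t) + (g t - g y)) by ring. apply Rabs_triang. }
        nra. }
  intros x y Hx Hy. destruct (Rle_dec x y).
  - apply ordered; auto.
  - rewrite (Rabs_minus_sym (g x)), (Rabs_minus_sym x). apply ordered; auto; lra.
Qed.

Lemma lipschitz_on_of_loc_lipschitz (I : R -> Prop) g a b :
  a <= b -> (forall x, a <= x <= b -> I x) -> loc_lipschitz_fun I g ->
  exists L, 0 <= L /\ lipschitz_on a b L g.
Proof.
  intros Hab HI Hg.
  apply (real_induction a b (fun t => exists L, 0 <= L /\ lipschitz_on a t L g)); auto.
  - exists 0. split; [lra|]. intros x y Hx Hy.
    replace x with a by lra. replace y with a by lra.
    rewrite Rminus_diag, Rabs_R0. lra.
  - intros t Ht [L [HL Hl]]. destruct (Hg t (HI t ltac:(lra))) as [d [Lt [Hd Hlt]]].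
    exists (d / 2). split; [lra|]. intros s Hs Hsb.
    exists (Rmax L (Rmax Lt 0)). split; [eapply Rle_trans; apply Rmax_r|].
    apply lipschitz_on_concat with t; try lra; [apply Rmax_r|exact Hl|].
    intros x y Hx Hy. eapply Rle_trans.
    + apply Hlt; [apply HI; lra|apply HI; lra|rewrite Rabs_right; lra|rewrite Rabs_right; lra].
    + apply Rmult_le_compat_r; [apply Rabs_pos|apply Rmax_l].
  - intros c Hc Hbelow. destruct (Hg c (HI c ltac:(lra))) as [d [Lc [Hd Hlc]]].
    set (t := Rmax a (c - d / 2)).
    assert (a <= t /\ c - d / 2 <= t /\ t < c) as (T1 & T2 & T3)
      by (unfold t, Rmax; destruct Rle_dec; lra).
    destruct (Hbelow t ltac:(lra)) as [L [HL Hl]].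
    exists (Rmax L (Rmax Lc 0)). split; [eapply Rle_trans; apply Rmax_r|].
    apply lipschitz_on_concat with t; try lra; [apply Rmax_r|exact Hl|].
    intros x y Hx Hy. eapply Rle_trans.
    + apply Hlc; [apply HI; lra|apply HI; lra|rewrite Rabs_left1; lra|rewrite Rabs_left1; lra].
    + apply Rmult_le_compat_r; [apply Rabs_pos|apply Rmax_l].
Qed.
Lemma sum_pow_half n : sum_f_R0 (fun k => (/ 2) ^ S k) n = 1 - (/ 2) ^ S n.
Proof.
  induction n as [|n IH]; [simpl; field|].
  rewrite tech5, IH. simpl. field.
Qed.

Lemma sum_f_R0_le_sum_f_R0 (u : nat -> R) m n :
  (forall j, 0 <= u j) -> (m <= n)%nat -> sum_f_R0 u m <= sum_f_R0 u n.
Proof.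
  intros Hu Hmn. induction Hmn as [|n _ IH]; [lra|].
  rewrite tech5. pose proof (Hu (S n)). lra.
Qed.

Lemma sum_f_R0_term_le (u : nat -> R) k n :
  (forall j, 0 <= u j) -> (k <= n)%nat -> u k <= sum_f_R0 u n.
Proof.
  intros Hu Hk. destruct k as [|k]; [exact (sum_f_R0_le_sum_f_R0 u 0 n Hu Hk)|].
  eapply Rle_trans; [|apply (sum_f_R0_le_sum_f_R0 u (S k)); auto].
  rewrite tech5. pose proof (cond_pos_sum u k Hu). lra.
Qed.

Lemma null1_slope_function N eps : null1 N -> 0 < eps ->
  exists phi : R -> R,
    (forall t, 0 <= phi t <= eps) /\
    (forall t s, t <= s -> phi t <= phi s) /\
    (forall t, N t -> exists d, 0 < d /\ forall s, t <= s <= t + d -> s - t <= phi s - phi t).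
Proof.
  intros HN Heps.
  destruct (HN (eps / 2) ltac:(lra)) as [a [b [Hab [Hcov Hsum]]]].
  (* [ell k t] is the length of [[a k, B k]] left of [t]; enlarging [b k] to [B k] leaves
     every point of [N] room to the right inside one covering interval *)
  set (B := fun k => b k + eps / 2 * (/ 2) ^ S k).
  assert (HbB : forall k, b k < B k).
  { intro k. unfold B. assert (0 < (/ 2) ^ S k) by (apply pow_lt; lra). nra. }
  set (ell := fun k t => Rmax 0 (Rmin t (B k) - a k)).
  assert (ell_nonneg : forall k t, 0 <= ell k t) by (intros; apply Rmax_l).
  assert (ell_le : forall k t, ell k t <= B k - a k).
  { intros k t. pose proof (HbB k). pose proof (Hab k).
    unfold ell, Rmax, Rmin. repeat destruct Rle_dec; lra. }
  assert (ell_incr : forall k t s, t <= s -> 0 <= ell k s - ell k t).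
  { intros k t s Hts. unfold ell, Rmax, Rmin. repeat destruct Rle_dec; lra. }
  assert (ell_slope : forall k t s, a k <= t <= s -> s <= B k -> ell k s - ell k t = s - t).
  { intros k t s H1 H2. unfold ell, Rmax, Rmin. repeat destruct Rle_dec; lra. }
  set (PS := fun n t => sum_f_R0 (fun k => ell k t) n).
  assert (PS_le : forall n t, PS n t <= eps).
  { intros n t. eapply Rle_trans; [apply (sum_Rle _ (fun k => B k - a k)); auto|].
    replace (sum_f_R0 (fun k => B k - a k) n) with
      (sum_f_R0 (fun k => b k - a k) n + eps / 2 * sum_f_R0 (fun k => (/ 2) ^ S k) n).
    2:{ unfold B. induction n as [|n IH]; [simpl; ring|]. rewrite !tech5, <- IH. ring. }
    rewrite sum_pow_half. specialize (Hsum n).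
    assert (0 < (/ 2) ^ S n) by (apply pow_lt; lra). nra. }
  assert (PS_mono : forall m n t, (m <= n)%nat -> PS m t <= PS n t)
    by (intros; apply sum_f_R0_le_sum_f_R0; auto).
  assert (PS_incr : forall n k t s, t <= s -> (k <= n)%nat ->
            ell k s - ell k t <= PS n s - PS n t).
  { intros n k t s Hts Hk. unfold PS. rewrite <- minus_sum.
    apply (sum_f_R0_term_le (fun j => ell j s - ell j t)); auto. }
  (* the slope function is the full series [sum_k ell k], obtained as a supremum *)
  set (Vals := fun t x => exists n, x = PS n t).
  assert (Vals_bound : forall t, bound (Vals t))
    by (intro t; exists eps; intros x [n ->]; apply PS_le).
  assert (Vals_inhabited : forall t, exists x, Vals t x)
    by (intro t; exists (PS 0%nat t); exists 0%nat; reflexivity).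
  set (phi := fun t => proj1_sig (completeness _ (Vals_bound t) (Vals_inhabited t))).
  assert (phi_lub : forall t, is_lub (Vals t) (phi t))
    by (intro t; exact (proj2_sig (completeness _ (Vals_bound t) (Vals_inhabited t)))).
  assert (phi_incr : forall k t s, t <= s -> phi t + (ell k s - ell k t) <= phi s).
  { intros k t s Hts. enough (phi t <= phi s - (ell k s - ell k t)) by lra.
    apply (proj2 (phi_lub t)). intros x [n ->].
    pose proof (PS_incr (Nat.max n k) k t s Hts ltac:(lia)).
    pose proof (PS_mono n (Nat.max n k) t ltac:(lia)).
    assert (PS (Nat.max n k) s <= phi s) by (apply (proj1 (phi_lub s)); eexists; reflexivity).
    lra. }
  exists phi. split; [|split].
  - intro t. split.
    + apply Rle_trans with (PS 0%nat t); [apply ell_nonneg|].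
      apply (proj1 (phi_lub t)). exists 0%nat. reflexivity.
    + apply (proj2 (phi_lub t)). intros x [n ->]. apply PS_le.
  - intros t s Hts. pose proof (phi_incr 0%nat t s Hts). pose proof (ell_incr 0%nat t s Hts). lra.
  - intros t Nt. destruct (Hcov t Nt) as [k Hk]. pose proof (HbB k).
    exists (B k - t). split; [lra|]. intros s Hs.
    pose proof (phi_incr k t s ltac:(lra)).
    rewrite (ell_slope k t s) in *; lra.
Qed.

Lemma derivable_pt_lim_forward_le g t d eps :
  derivable_pt_lim g t d -> 0 < eps ->
  exists del, 0 < del /\ forall s, t < s <= t + del -> g s - g t <= (d + eps) * (s - t).
Proof.
  intros Hd Heps. destruct (Hd eps Heps) as [[del Hdel] Hq]; simpl in Hq.
  exists (del / 2). split; [lra|]. intros s Hs.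
  specialize (Hq (s - t) ltac:(lra) ltac:(rewrite Rabs_right; lra)).
  replace (t + (s - t)) with s in Hq by ring.
  pose proof (Rle_abs ((g s - g t) / (s - t) - d)).
  replace (g s - g t) with ((g s - g t) / (s - t) * (s - t)) by (field; lra).
  apply Rmult_le_compat_r; lra.
Qed.

Lemma lipschitz_ae_deriv_nonpos_le g a b L N :
  a <= b -> 0 <= L -> lipschitz_on a b L g -> null1 N ->
  (forall t, a <= t <= b -> ~ N t -> exists d, derivable_pt_lim g t d /\ d <= 0) ->
  g b <= g a.
Proof.
  intros Hab HL Hlip HN Hder.
  enough (g b - g a <= 0) by lra.
  apply (le_of_forall_le_plus_mul _ _ (b - a + L)); [lra|]. intros eps Heps.
  destruct (null1_slope_function N eps HN Heps) as [phi [phi_bound [phi_mono phi_slope]]].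
  (* off N the increments of g are below [eps * dt]; on N, Lipschitz increments are
     absorbed by the slope function [phi], whose total variation is at most [eps] *)
  enough (g b - g a <= eps * (b - a) + L * (phi b - phi a)).
  { pose proof (phi_bound a). pose proof (phi_bound b). nra. }
  apply (real_induction a b (fun t => g t - g a <= eps * (t - a) + L * (phi t - phi a)));
    [exact Hab|lra| |].
  - intros t Ht St. destruct (classic (N t)) as [Nt|Nt].
    + destruct (phi_slope t Nt) as [d [Hd Hs]]. exists d. split; [exact Hd|].
      intros s Hts Hsb. pose proof (Hlip s t ltac:(lra) ltac:(lra)) as Hl.
      rewrite (Rabs_right (s - t)) in Hl by lra.
      pose proof (Rle_abs (g s - g t)). specialize (Hs s ltac:(lra)).
      assert (L * (s - t) <= L * (phi s - phi t)) by (apply Rmult_le_compat_l; lra).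
      nra.
    + destruct (Hder t ltac:(lra) Nt) as [d [Hd Hd0]].
      destruct (derivable_pt_lim_forward_le g t d eps Hd Heps) as [del [Hdel Hinc]].
      exists del. split; [exact Hdel|]. intros s Hts Hsb.
      specialize (Hinc s Hts). pose proof (phi_mono t s ltac:(lra)).
      assert (L * (phi t - phi a) <= L * (phi s - phi a)) by (apply Rmult_le_compat_l; lra).
      nra.
  - intros c Hc Hbelow.
    apply (le_of_forall_le_plus_mul _ _ L HL). intros q Hq.
    set (s := Rmax a (c - q)).
    assert (a <= s /\ c - q <= s /\ s < c) as (S1 & S2 & S3)
      by (unfold s, Rmax; destruct Rle_dec; lra).
    specialize (Hbelow s ltac:(lra)).
    pose proof (Hlip c s ltac:(lra) ltac:(lra)) as Hl.
    rewrite (Rabs_right (c - s)) in Hl by lra.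
    pose proof (Rle_abs (g c - g s)). pose proof (phi_mono s c ltac:(lra)).
    assert (L * (phi s - phi a) <= L * (phi c - phi a)) by (apply Rmult_le_compat_l; lra).
    assert (L * (c - s) <= L * q) by (apply Rmult_le_compat_l; lra).
    nra.
Qed.

Lemma loc_lipschitz_ae_deriv_nonpos_le (I : R -> Prop) g a b N :
  a <= b -> (forall x, a <= x <= b -> I x) -> loc_lipschitz_fun I g -> null1 N ->
  (forall t, a <= t <= b -> ~ N t -> exists d, derivable_pt_lim g t d /\ d <= 0) ->
  g b <= g a.
Proof.
  intros Hab HI Hg HN Hd.
  destruct (lipschitz_on_of_loc_lipschitz I g a b Hab HI Hg) as [L [HL Hl]].
  exact (lipschitz_ae_deriv_nonpos_le g a b L N Hab HL Hl HN Hd).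
Qed.

Section LyapunovAlongSolution.

Variables (I : R -> Prop) (w : R -> R) (N : R -> Prop) (mu : R).
Hypotheses (HI : is_interval I) (Hw : loc_lipschitz_fun I w) (HN : null1 N) (Hmu : 0 < mu).
Hypothesis Hder :
  forall t, I t -> ~ N t -> exists d, derivable_pt_lim w t d /\ d <= - mu * w t.
Hypothesis Hpos : forall t, I t -> 0 <= w t.

Lemma lyapunov_nonincreasing a b : I a -> I b -> a <= b -> w b <= w a.
Proof.
  intros Ia Ib Hab.
  apply (loc_lipschitz_ae_deriv_nonpos_le I w a b N Hab); auto.
  - intros x Hx. exact (HI a x b Ia Ib Hx).
  - intros t Ht Nt. assert (It : I t) by exact (HI a t b Ia Ib Ht).
    destruct (Hder t It Nt) as [d [Hd Hdw]]. exists d. split; [exact Hd|].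
    pose proof (Hpos t It). nra.
Qed.

Lemma lyapunov_decay a t c : I a -> I t -> 0 < c -> w a < mu * c * (t - a) -> w t < c.
Proof.
  intros Ia It Hc Hta.
  destruct (Rlt_le_dec (w t) c) as [h|Hct]; [exact h|exfalso].
  assert (Hmc : 0 < mu * c) by nra.
  assert (Hat : a <= t) by (pose proof (Hpos a Ia); nra).
  (* while [w >= c], the function [w s + mu c s] is nonincreasing *)
  set (g := fun s => w s + mu * c * s).
  enough (g t <= g a) by (unfold g in *; nra).
  apply (loc_lipschitz_ae_deriv_nonpos_le I g a t N Hat); auto.
  - intros x Hx. exact (HI a x t Ia It Hx).
  - intros s Is. destruct (Hw s Is) as [d [L [Hd HL]]]. exists d, (L + mu * c).
    split; [exact Hd|]. intros x y Ix Iy H1 H2. specialize (HL x y Ix Iy H1 H2). unfold g.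
    replace (w x + mu * c * x - (w y + mu * c * y)) with ((w x - w y) + mu * c * (x - y)) by ring.
    eapply Rle_trans; [apply Rabs_triang|].
    rewrite Rabs_mult, (Rabs_right (mu * c)) by lra. nra.
  - intros s Hs Ns. assert (Is : I s) by exact (HI a s t Ia It Hs).
    destruct (Hder s Is Ns) as [d [Hd Hdw]]. exists (d + mu * c * 1). split.
    + exact (derivable_pt_lim_plus _ _ _ _ _ Hd
               (derivable_pt_lim_scal _ (mu * c) _ _ (derivable_pt_lim_id s))).
    + assert (w t <= w s) by (apply lyapunov_nonincreasing; auto; lra).
      nra.
Qed.

End LyapunovAlongSolution.

Definition lyap (r b : R) (x : V4) : R := cE x + r * cF x + b * cM x + cMs x.

Lemma lyap_vsub r b x y : lyap r b (vsub x y) = lyap r b x - lyap r b y.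
Proof. unfold lyap, vsub, vadd, vscale; simpl; ring. Qed.

Lemma lyap_convex_comb r b x y t :
  lyap r b (vadd (vscale t x) (vscale (1 - t) y)) = t * lyap r b x + (1 - t) * lyap r b y.
Proof. unfold lyap, vadd, vscale; simpl; ring. Qed.

Lemma vnorm_vsub_vzero x : vnorm (vsub x vzero) = vnorm x.
Proof. unfold vnorm, vsub, vadd, vscale, vzero; simpl. f_equal. ring. Qed.

Lemma bounded_by_vnorm_of_sqr_le c x :
  c ^ 2 <= cE x ^ 2 + cM x ^ 2 + cF x ^ 2 + cMs x ^ 2 -> - vnorm x <= c <= vnorm x.
Proof.
  intro H. assert (Habs : Rabs c <= vnorm x).
  { unfold vnorm. rewrite <- sqrt_Rsqr_abs. apply sqrt_le_1_alt.
    unfold Rsqr. simpl in *. lra. }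
  pose proof (Rle_abs c). pose proof (Rle_abs (- c)). rewrite Rabs_Ropp in *. lra.
Qed.

Lemma Rabs_lyap_le r b x : 0 <= r -> 0 <= b -> Rabs (lyap r b x) <= (2 + r + b) * vnorm x.
Proof.
  intros Hr Hb.
  pose proof (pow2_ge_0 (cE x)). pose proof (pow2_ge_0 (cM x)).
  pose proof (pow2_ge_0 (cF x)). pose proof (pow2_ge_0 (cMs x)).
  assert (hE : - vnorm x <= cE x <= vnorm x) by (apply bounded_by_vnorm_of_sqr_le; lra).
  assert (hM : - vnorm x <= cM x <= vnorm x) by (apply bounded_by_vnorm_of_sqr_le; lra).
  assert (hF : - vnorm x <= cF x <= vnorm x) by (apply bounded_by_vnorm_of_sqr_le; lra).
  assert (hMs : - vnorm x <= cMs x <= vnorm x) by (apply bounded_by_vnorm_of_sqr_le; lra).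
  apply Rabs_le. unfold lyap. split; nra.
Qed.

Lemma lyap_coercive r b : 0 < r -> 0 < b ->
  exists m, 0 < m /\ forall x, Dp x -> m * vnorm x <= lyap r b x.
Proof.
  intros Hr Hb. set (m := Rmin (Rmin 1 r) b).
  assert (m <= 1 /\ m <= r /\ m <= b /\ 0 < m) as (m1 & m2 & m3 & m0)
    by (unfold m, Rmin; repeat destruct Rle_dec; lra).
  exists m. split; [exact m0|]. intros x (h1 & h2 & h3 & h4).
  assert (vnorm x <= cE x + cM x + cF x + cMs x).
  { unfold vnorm. rewrite <- (sqrt_pow2 (cE x + cM x + cF x + cMs x)) by lra.
    apply sqrt_le_1_alt. nra. }
  unfold lyap. nra.
Qed.

Lemma null4_empty : null4 (fun _ => False).
Proof.
  intros eps Heps. exists (fun _ => vzero), (fun _ => vzero). split; [|split].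
  - intros k; simpl; repeat split; lra.
  - intros x [].
  - intros n. enough (sum_f_R0 (fun k => box_vol vzero vzero) n = 0) by lra.
    induction n as [|n IH]; [unfold box_vol; simpl; ring|].
    rewrite tech5, IH. unfold box_vol; simpl; ring.
Qed.

Lemma lyap_le_on_cl_conv_hull r b (S : V4 -> Prop) c v :
  0 <= r -> 0 <= b -> (forall w, S w -> lyap r b w <= c) -> cl_conv_hull S v ->
  lyap r b v <= c.
Proof.
  intros Hr Hb HS Hv. apply (Hv (fun w => lyap r b w <= c)); [| |exact HS].
  - intros x Hx. apply (le_of_forall_le_plus_mul _ _ (2 + r + b)); [lra|].
    intros e He. destruct (Hx e He) as [y [Hy Hyx]].
    pose proof (Rabs_lyap_le r b (vsub y x) Hr Hb) as Hl. rewrite lyap_vsub in Hl.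
    pose proof (Rle_abs (- (lyap r b y - lyap r b x))). rewrite Rabs_Ropp in *.
    assert ((2 + r + b) * vnorm (vsub y x) <= (2 + r + b) * e)
      by (apply Rmult_le_compat_l; lra).
    lra.
  - intros x y t Hx Hy Ht. rewrite lyap_convex_comb. nra.
Qed.

Lemma filippov_set_lyap_le (X : V4 -> V4) r b mu :
  0 <= r -> 0 <= b -> 0 <= mu ->
  (forall y, Dp y -> lyap r b (X y) <= - mu * lyap r b y) ->
  forall z v, filippov_set X z v -> lyap r b v <= - mu * lyap r b z.
Proof.
  intros Hr Hb Hmu HX z v Hv.
  apply (le_of_forall_le_plus_mul _ _ (mu * (2 + r + b))); [nra|]. intros e He.
  refine (lyap_le_on_cl_conv_hull r b _ _ v Hr Hb _ (Hv e He _ null4_empty)).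
  intros w [y [Dy [Hyz [_ ->]]]].
  pose proof (HX y Dy).
  pose proof (Rabs_lyap_le r b (vsub y z) Hr Hb) as Hl. rewrite lyap_vsub in Hl.
  pose proof (Rle_abs (- (lyap r b y - lyap r b z))). rewrite Rabs_Ropp in *.
  assert ((2 + r + b) * vnorm (vsub y z) <= (2 + r + b) * e)
    by (apply Rmult_le_compat_l; lra).
  assert (mu * (lyap r b z - lyap r b y) <= mu * ((2 + r + b) * e))
    by (apply Rmult_le_compat_l; lra).
  lra.
Qed.

Lemma ratio_between_0_1 M Ms g :
  0 <= M -> 0 <= Ms -> 0 < g -> 0 <= M / (M + g * Ms) <= 1.
Proof.
  intros HM HMs Hg. destruct (Req_dec (M + g * Ms) 0) as [e|e].
  - rewrite e. unfold Rdiv. rewrite Rinv_0. lra.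
  - assert (0 < M + g * Ms) by nra. split.
    + apply Rmult_le_pos; [lra|]. left. apply Rinv_0_lt_compat. lra.
    + apply (Rmult_le_reg_r (M + g * Ms)); [lra|].
      unfold Rdiv. rewrite Rmult_assoc, Rinv_l by lra. nra.
Qed.

Lemma R0_basic_lt_1_weight betaE nuE deltaE deltaF nu :
  0 < betaE -> 0 < nuE -> 0 < deltaE -> 0 < deltaF -> 0 < nu ->
  R0_basic betaE nuE deltaE deltaF nu < 1 ->
  exists r, 0 < r /\ betaE < r * deltaF /\ r * (nu * nuE) < nuE + deltaE.
Proof.
  intros HbE HnE HdE HdF Hnu HR. unfold R0_basic in HR.
  assert (HP : 0 < nu * nuE) by nra.
  assert (Hlo : betaE / deltaF < (nuE + deltaE) / (nu * nuE)).
  { apply (Rmult_lt_reg_r (deltaF * (nu * nuE))); [nra|].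
    apply (Rmult_lt_compat_r (deltaF * (nuE + deltaE))) in HR; [|nra].
    unfold Rdiv in *. rewrite Rmult_1_l in HR.
    replace (betaE * / deltaF * (deltaF * (nu * nuE))) with (betaE * nu * nuE) by (field; lra).
    replace ((nuE + deltaE) * / (nu * nuE) * (deltaF * (nu * nuE)))
      with (deltaF * (nuE + deltaE)) by (field; lra).
    replace (betaE * nu * nuE * / (deltaF * (nuE + deltaE)) * (deltaF * (nuE + deltaE)))
      with (betaE * nu * nuE) in HR by (field; lra).
    exact HR. }
  set (r := (betaE / deltaF + (nuE + deltaE) / (nu * nuE)) / 2).
  assert (0 < betaE / deltaF) by (apply Rdiv_lt_0_compat; lra).
  exists r. split; [unfold r; lra|]. split.
  - apply (Rmult_lt_reg_r (/ deltaF)); [apply Rinv_0_lt_compat; lra|].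
    replace (r * deltaF * / deltaF) with r by (field; lra). unfold r, Rdiv in *. lra.
  - apply (Rmult_lt_reg_r (/ (nu * nuE))); [apply Rinv_0_lt_compat; lra|].
    replace (r * (nu * nuE) * / (nu * nuE)) with r by (field; lra). unfold r, Rdiv in *. lra.
Qed.

Lemma lyap_Xfield_le betaE nuE deltaE deltaM deltaF deltaS K nu gammaS :
  0 < betaE -> 0 < nuE -> 0 < deltaE -> 0 < deltaM -> 0 < deltaF ->
  0 < deltaS -> 0 < K -> 0 < nu < 1 -> 0 < gammaS ->
  R0_basic betaE nuE deltaE deltaF nu < 1 ->
  exists r b mu, 0 < r /\ 0 < b /\ 0 < mu /\
    forall y, Dp y ->
      lyap r b (Xfield betaE nuE deltaE deltaM deltaF deltaS K nu gammaS (fun _ => 0) y)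
        <= - mu * lyap r b y.
Proof.
  intros HbE HnE HdE HdM HdF HdS HK Hnu Hg HR.
  destruct (R0_basic_lt_1_weight betaE nuE deltaE deltaF nu HbE HnE HdE HdF ltac:(lra) HR)
    as [r [Hr [HrF HrE]]].
  set (a := nuE + deltaE) in HrE. set (P := nu * nuE) in HrE.
  (* [b] is chosen so that the male compartment absorbs half of the spare decay rate of E *)
  set (b := (a - r * P) / (2 * nuE)).
  assert (Eb : b * nuE = (a - r * P) / 2) by (unfold b; field; lra).
  assert (Hb : 0 < b) by (unfold b; apply Rdiv_lt_0_compat; lra).
  set (mu := Rmin (Rmin ((a - r * P) / 2) ((r * deltaF - betaE) / r)) (Rmin deltaM deltaS)).
  assert (0 < (r * deltaF - betaE) / r) by (apply Rdiv_lt_0_compat; lra).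
  assert (mu <= (a - r * P) / 2 /\ mu <= (r * deltaF - betaE) / r /\
          mu <= deltaM /\ mu <= deltaS /\ 0 < mu) as (M1 & M2 & M3 & M4 & Hmu)
    by (unfold mu, Rmin; repeat destruct Rle_dec; lra).
  assert (M2' : mu * r <= r * deltaF - betaE).
  { replace (r * deltaF - betaE) with ((r * deltaF - betaE) / r * r) by (field; lra).
    apply Rmult_le_compat_r; lra. }
  exists r, b, mu. split; [exact Hr|]. split; [exact Hb|]. split; [exact Hmu|].
  intros y (hE & hM & hF & hMs). unfold lyap, Xfield. simpl.
  set (E := cE y) in *. set (M := cM y) in *. set (F := cF y) in *. set (Ms := cMs y) in *.
  pose proof (ratio_between_0_1 M Ms gammaS hM hMs Hg) as Hrho.
  set (rho := M / (M + gammaS * Ms)) in *.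
  assert (0 <= E / K) by (apply Rmult_le_pos; [lra|left; apply Rinv_0_lt_compat; lra]).
  assert (0 <= betaE * F) by nra.
  assert (betaE * F * (1 - E / K) <= betaE * F) by nra.
  assert (0 <= r * (P * E))
    by (apply Rmult_le_pos; [lra|apply Rmult_le_pos; [unfold P; nra|lra]]).
  assert (r * (nu * nuE * E * rho) <= r * (P * E)).
  { replace (r * (nu * nuE * E * rho)) with (r * (P * E) * rho) by (unfold P; ring). nra. }
  assert (b * ((1 - nu) * nuE * E) <= (a - r * P) / 2 * E).
  { rewrite <- Eb. assert (0 <= b * nuE * E) by (apply Rmult_le_pos; nra). nra. }
  assert (mu * E <= (a - r * P) / 2 * E) by (apply Rmult_le_compat_r; lra).
  assert (mu * r * F <= (r * deltaF - betaE) * F) by (apply Rmult_le_compat_r; lra).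
  assert (mu * b * M <= deltaM * b * M) by (apply Rmult_le_compat_r; [lra|nra]).
  assert (mu * Ms <= deltaS * Ms) by (apply Rmult_le_compat_r; lra).
  unfold a in *. nra.
Qed.

Lemma lyap_along_filippov_solution (X : V4 -> V4) r b mu I z :
  0 <= r -> 0 <= b -> 0 <= mu ->
  (forall y, Dp y -> lyap r b (X y) <= - mu * lyap r b y) ->
  filippov_solution X I z ->
  loc_lipschitz_fun I (fun t => lyap r b (z t)) /\
  (exists N, null1 N /\ forall t, I t -> ~ N t ->
     exists d, derivable_pt_lim (fun t => lyap r b (z t)) t d /\ d <= - mu * lyap r b (z t)) /\
  (forall t, I t -> 0 <= lyap r b (z t)).
Proof.
  intros Hr Hb Hmu HX (Hint & HD & Hlip & N & HN & Hder). split; [|split].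
  - intros t It. destruct (Hlip t It) as [d [L [Hd HL]]]. exists d, ((2 + r + b) * L).
    split; [exact Hd|]. intros s s' Is Is' H1 H2. specialize (HL s s' Is Is' H1 H2).
    rewrite <- lyap_vsub. eapply Rle_trans; [apply Rabs_lyap_le; auto|].
    rewrite Rmult_assoc. apply Rmult_le_compat_l; lra.
  - exists N. split; [exact HN|]. intros t It Nt.
    destruct (Hder t It Nt) as [v [(HE & HM & HF & HMs) Hv]].
    exists (lyap r b v). split.
    + exact (derivable_pt_lim_plus _ _ _ _ _
               (derivable_pt_lim_plus _ _ _ _ _
                  (derivable_pt_lim_plus _ _ _ _ _ HE (derivable_pt_lim_scal _ r _ _ HF))
                  (derivable_pt_lim_scal _ b _ _ HM))
               HMs).
    + exact (filippov_set_lyap_le X r b mu Hr Hb Hmu HX (z t) v Hv).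
  - intros t It. destruct (HD t It) as (h1 & h2 & h3 & h4). unfold lyap. nra.
Qed.

Section LinearLyapunovFunction.

Variables (X : V4 -> V4) (r b mu : R).
Hypotheses (Hr : 0 < r) (Hb : 0 < b) (Hmu : 0 < mu).
Hypothesis HX : forall y, Dp y -> lyap r b (X y) <= - mu * lyap r b y.

Lemma lyap_stable : stable_in X Dp vzero.
Proof.
  destruct (lyap_coercive r b Hr Hb) as [m [Hm Hcoer]].
  set (C := 2 + r + b). assert (HC : 0 < C) by (unfold C; lra).
  intros eps Heps. exists (eps * m / C). split; [apply Rdiv_lt_0_compat; nra|].
  intros I z Hsol I0 _ Hz0 t It Ht. rewrite vnorm_vsub_vzero in *.
  destruct (lyap_along_filippov_solution X r b mu I z ltac:(lra) ltac:(lra) ltac:(lra) HX Hsol)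
    as [Hw [[N [HN Hd]] Hpos]].
  destruct Hsol as [Hint [HD _]].
  pose proof (lyapunov_nonincreasing I _ N mu Hint Hw HN Hmu Hd Hpos 0 t I0 It ltac:(lra)).
  pose proof (Hcoer (z t) (HD t It)).
  pose proof (Rle_abs (lyap r b (z 0))).
  assert (Rabs (lyap r b (z 0)) <= C * vnorm (z 0)) by (apply Rabs_lyap_le; lra).
  assert (Hsmall : C * vnorm (z 0) < C * (eps * m / C)) by (apply Rmult_lt_compat_l; lra).
  replace (C * (eps * m / C)) with (eps * m) in Hsmall by (field; lra).
  apply (Rmult_lt_reg_l m); [exact Hm|]. lra.
Qed.

Lemma lyap_global_attractor : global_attractor_in X Dp vzero.
Proof.
  destruct (lyap_coercive r b Hr Hb) as [m [Hm Hcoer]].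
  intros I z Hsol HI _ eps Heps.
  destruct (lyap_along_filippov_solution X r b mu I z ltac:(lra) ltac:(lra) ltac:(lra) HX Hsol)
    as [Hw [[N [HN Hd]] Hpos]].
  destruct Hsol as [Hint [HD _]].
  set (c := eps * m). assert (Hc : 0 < c) by (unfold c; nra).
  set (w0 := lyap r b (z 0)). assert (Hw0 : 0 <= w0) by (apply Hpos, HI; lra).
  assert (Hmc : 0 < mu * c) by nra.
  set (T := w0 / (mu * c)).
  assert (HT : T * (mu * c) = w0) by (unfold T; field; lra).
  assert (HT0 : 0 <= T) by (unfold T; apply Rmult_le_pos; [lra|left; apply Rinv_0_lt_compat; lra]).
  exists (T + 1). intros t Ht. rewrite vnorm_vsub_vzero.
  assert (It : I t) by (apply HI; lra).
  assert (Hw0t : w0 < mu * c * (t - 0)).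
  { assert (mu * c * (T + 1) <= mu * c * t) by (apply Rmult_le_compat_l; lra). nra. }
  pose proof (lyapunov_decay I _ N mu Hint Hw HN Hmu Hd Hpos 0 t c (HI 0 (Rle_refl 0)) It Hc Hw0t).
  pose proof (Hcoer (z t) (HD t It)).
  apply (Rmult_lt_reg_l m); [exact Hm|]. unfold c in *. lra.
Qed.

End LinearLyapunovFunction.

Theorem theorem2 (betaE nuE deltaE deltaM deltaF deltaS K nu gammaS : R) :
  0 < betaE -> 0 < nuE -> 0 < deltaE -> 0 < deltaM -> 0 < deltaF ->
  0 < deltaS -> 0 < K -> 0 < nu < 1 -> 0 < gammaS <= 1 -> deltaM <= deltaS ->
  R0_basic betaE nuE deltaE deltaF nu < 1 ->
  GAS_in (Xfield betaE nuE deltaE deltaM deltaF deltaS K nu gammaS (fun _ => 0))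
         Dp vzero.
Proof.
  intros HbE HnE HdE HdM HdF HdS HK Hnu Hg _ HR.
  destruct (lyap_Xfield_le betaE nuE deltaE deltaM deltaF deltaS K nu gammaS
              HbE HnE HdE HdM HdF HdS HK Hnu (proj1 Hg) HR)
    as (r & b & mu & Hr & Hb & Hmu & HX).
  split; [apply (lyap_stable _ r b mu)|apply (lyap_global_attractor _ r b mu)]; assumption.
Qed.
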